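(* Let $A=\mathbb Z[\mathbb R]$ be the integral group ring of the additive group $\mathbb R$, with elements written as finite formal sums $\sum c_\alpha[\alpha]$. Let $d:A\to\mathbb Z$ and $v:A\to\mathbb R$ be the additive homomorphisms with $d([\alpha])=1$, $v([\alpha])=\alpha$, and let $(x,y)\mapsto x\vee y$ be the bi-additive map $A\times A\to A$ with $[\alpha]\vee[\beta]=[\max\{\alpha,\beta\}]$. Let $A^+$ be the set of $\sum_\alpha c_\alpha[\alpha]$ with $c_\alpha=0$ for $\alpha<0$ and $c_\alpha\ge0$ for all $\alpha$. Then for all $\sigma,\tau\in A^+$, $$v(\sigma\vee\tau)\le d(\tau)v(\sigma)+d(\sigma)v(\tau)-\min\{v(\sigma),v(\tau)\}.$$ *)

From Stdlib Require Import Reals ZArith List.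
Import ListNotations.
Open Scope R_scope.

(* An element of A = Z[R] is represented by a finite formal sum
   sum_i c_i [alpha_i], i.e. a list of pairs (c_i, alpha_i).
   Two lists represent the same element iff they have the same [coef]. *)
Definition A : Type := list (Z * R).

Definition coef (x : A) (g : R) : Z :=
  fold_right (fun p acc => if Req_EM_T (snd p) g then (fst p + acc)%Z else acc) 0%Z x.

Definition gen (a : R) : A := [(1%Z, a)].

Definition d (x : A) : Z := fold_right (fun p acc => (fst p + acc)%Z) 0%Z x.

Definition v (x : A) : R := fold_right (fun p acc => IZR (fst p) * snd p + acc) 0 x.

Definition join (x y : A) : A :=
  flat_map (fun p => map (fun q => ((fst p * fst q)%Z, Rmax (snd p) (snd q))) y) x.

Definition Apos (x : A) : Prop :=
  forall a : R, (a < 0 -> coef x a = 0%Z) /\ (0 <= coef x a)%Z.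

(* Since max(a,b) = a + b - min(a,b), bi-additivity gives
   v(σ ∨ τ) = d(τ) v(σ) + d(σ) v(τ) - W with W = Σ c_a c'_b min(a,b),
   so it suffices to show min(v σ, v τ) <= W.  Write σ and τ with positive
   integer coefficients on nonnegative exponents, and let [m] be the largest
   exponent occurring in either.  If [m] occurs in τ with coefficient c' >= 1,
   the terms of W with b = m already give c' Σ c_a a >= v(σ); symmetrically if
   [m] occurs in σ. *)

From Stdlib Require Import Reals ZArith List Lra Lia.
Import ListNotations.
Open Scope R_scope.

Definition wsum (f : R -> R) (x : A) : R :=
  fold_right (fun p acc => IZR (fst p) * f (snd p) + acc) 0 x.

Lemma v_wsum x : v x = wsum (fun a => a) x.
Proof. reflexivity. Qed.

Lemma d_wsum x : IZR (d x) = wsum (fun _ => 1) x.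
Proof.
  induction x as [|p x IH]; [reflexivity|].
  unfold d, wsum in *; simpl; rewrite plus_IZR, IH; ring.
Qed.

Lemma wsum_app f x y : wsum f (x ++ y) = wsum f x + wsum f y.
Proof. induction x as [|p x IH]; simpl; [ring|]; rewrite IH; ring. Qed.

Lemma wsum_ext f h x : (forall a, f a = h a) -> wsum f x = wsum h x.
Proof. intros E; induction x as [|p x IH]; simpl; [reflexivity|]; now rewrite E, IH. Qed.

Lemma wsum_zero x : wsum (fun _ => 0) x = 0.
Proof. induction x as [|p x IH]; simpl; [reflexivity|]; rewrite IH; ring. Qed.

Lemma wsum_add f h x : wsum (fun a => f a + h a) x = wsum f x + wsum h x.
Proof. induction x as [|p x IH]; simpl; [ring|]; rewrite IH; ring. Qed.

Lemma wsum_scal c f x : wsum (fun a => c * f a) x = c * wsum f x.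
Proof. induction x as [|p x IH]; simpl; [ring|]; rewrite IH; ring. Qed.

Lemma wsum_affine_sub al be f x :
  wsum (fun a => al * a + be - f a) x = al * v x + be * IZR (d x) - wsum f x.
Proof.
  rewrite v_wsum, d_wsum.
  induction x as [|p x IH]; simpl; [ring|]; rewrite IH; ring.
Qed.

Lemma wsum_comm (F : R -> R -> R) x y :
  wsum (fun a => wsum (F a) y) x = wsum (fun b => wsum (fun a => F a b) x) y.
Proof.
  induction x as [|[c a] x IH]; simpl.
  - now rewrite wsum_zero.
  - rewrite IH, <- wsum_scal, <- wsum_add; reflexivity.
Qed.

Lemma wsum_map_scal f c F y :
  wsum f (map (fun q => ((c * fst q)%Z, F (snd q))) y) =
  IZR c * wsum (fun b => f (F b)) y.
Proof. induction y as [|q y IH]; simpl; [ring|]; rewrite IH, mult_IZR; ring. Qed.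

Lemma v_join x y : v (join x y) = wsum (fun a => wsum (Rmax a) y) x.
Proof.
  rewrite v_wsum; unfold join.
  induction x as [|[c a] x IH]; simpl; [reflexivity|].
  now rewrite wsum_app, IH, wsum_map_scal.
Qed.

Lemma v_join_min x y :
  v (join x y) =
  IZR (d y) * v x + IZR (d x) * v y - wsum (fun a => wsum (Rmin a) y) x.
Proof.
  rewrite v_join, (wsum_ext _ (fun a => IZR (d y) * a + v y - wsum (Rmin a) y)).
  - rewrite wsum_affine_sub; ring.
  - intros a.
    rewrite (wsum_ext (Rmax a) (fun b => 1 * b + a - Rmin a b))
      by (intros b; unfold Rmax, Rmin; destruct Rle_dec; ring).
    rewrite wsum_affine_sub; ring.
Qed.

Definition pos_list (x : A) : Prop :=
  forall p, In p x -> (1 <= fst p)%Z /\ 0 <= snd p.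

Lemma wsum_le x f h : pos_list x ->
  (forall p, In p x -> f (snd p) <= h (snd p)) -> wsum f x <= wsum h x.
Proof.
  induction x as [|[c a] x IH]; intros Hx Hfh; simpl; [lra|].
  assert (1 <= IZR c) by (apply IZR_le, (Hx (c, a)); now left).
  assert (f a <= h a) by (apply (Hfh (c, a)); now left).
  assert (wsum f x <= wsum h x).
  { apply IH; intros p Hp; [apply Hx | apply Hfh]; now right. }
  nra.
Qed.

Lemma wsum_nonneg x f : pos_list x ->
  (forall p, In p x -> 0 <= f (snd p)) -> 0 <= wsum f x.
Proof.
  intros Hx Hf; rewrite <- (wsum_zero x); now apply wsum_le.
Qed.

Lemma wsum_ge_mem x f q : pos_list x ->
  (forall p, In p x -> 0 <= f (snd p)) -> In q x -> f (snd q) <= wsum f x.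
Proof.
  induction x as [|[c a] x IH]; intros Hx Hf Hq; simpl; [destruct Hq|].
  assert (1 <= IZR c) by (apply IZR_le, (Hx (c, a)); now left).
  assert (0 <= f a) by (apply (Hf (c, a)); now left).
  assert (Hx' : pos_list x) by (intros p Hp; apply Hx; now right).
  assert (Hf' : forall p, In p x -> 0 <= f (snd p)) by (intros p Hp; apply Hf; now right).
  destruct Hq as [<-|Hq]; simpl.
  - pose proof (wsum_nonneg x f Hx' Hf'); nra.
  - pose proof (IH Hx' Hf' Hq); nra.
Qed.

Lemma exists_max_snd (l : A) : l <> [] ->
  exists r, In r l /\ forall p, In p l -> snd p <= snd r.
Proof.
  induction l as [|q l IH]; [now intros []|intros _].
  destruct l as [|q' l].
  - exists q; split; [now left|]; intros p [<-|[]]; lra.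
  - destruct IH as [r [Hr Hmax]]; [discriminate|].
    destruct (Rle_dec (snd q) (snd r)).
    + exists r; split; [now right|]; intros p [<-|Hp]; auto.
    + exists q; split; [now left|]; intros p [<-|Hp]; [lra|].
      specialize (Hmax p Hp); lra.
Qed.

Lemma wsum_min_comm x y :
  wsum (fun a => wsum (Rmin a) y) x = wsum (fun b => wsum (Rmin b) x) y.
Proof.
  rewrite wsum_comm; apply wsum_ext; intros b; apply wsum_ext; intros a.
  apply Rmin_comm.
Qed.

Lemma v_le_wsum_min x y q : pos_list x -> pos_list y -> In q y ->
  (forall p, In p x -> snd p <= snd q) ->
  v x <= wsum (fun a => wsum (Rmin a) y) x.
Proof.
  intros Hx Hy Hq Hdom; rewrite v_wsum; apply wsum_le; [exact Hx|].
  intros p Hp; cbv beta.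
  assert (0 <= snd p) by apply (Hx p Hp).
  replace (snd p) with (Rmin (snd p) (snd q)) at 1 by (apply Rmin_left, Hdom, Hp).
  apply (wsum_ge_mem y (Rmin (snd p))); auto.
  intros r Hr; apply Rmin_glb; [lra | apply (Hy r Hr)].
Qed.

Lemma Rmin_v_le_wsum_min x y : pos_list x -> pos_list y ->
  Rmin (v x) (v y) <= wsum (fun a => wsum (Rmin a) y) x.
Proof.
  intros Hx Hy.
  assert (Hxy : x ++ y = [] \/ x ++ y <> []) by (destruct (x ++ y); auto; now right).
  destruct Hxy as [E|Hne].
  - apply app_eq_nil in E as [-> ->]; simpl; apply Rmin_l.
  - destruct (exists_max_snd _ Hne) as [r [Hr Hmax]].
    destruct (in_app_or _ _ _ Hr) as [Hrx|Hry].
    + rewrite wsum_min_comm; eapply Rle_trans; [apply Rmin_r|].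
      apply (v_le_wsum_min y x r); auto.
      intros p Hp; apply Hmax, in_or_app; now right.
    + eapply Rle_trans; [apply Rmin_l|].
      apply (v_le_wsum_min x y r); auto.
      intros p Hp; apply Hmax, in_or_app; now left.
Qed.

Lemma v_join_le_pos x y : pos_list x -> pos_list y ->
  v (join x y) <= IZR (d y) * v x + IZR (d x) * v y - Rmin (v x) (v y).
Proof.
  intros Hx Hy; rewrite v_join_min.
  pose proof (Rmin_v_le_wsum_min x y Hx Hy); lra.
Qed.

Definition wsum_eq (x y : A) : Prop := forall f, wsum f x = wsum f y.

Lemma v_wsum_eq {x y} : wsum_eq x y -> v x = v y.
Proof. intros E; rewrite !v_wsum; apply E. Qed.

Lemma d_wsum_eq {x y} : wsum_eq x y -> d x = d y.
Proof. intros E; apply eq_IZR; rewrite !d_wsum; apply E. Qed.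

Lemma v_join_wsum_eq {x x' y y'} :
  wsum_eq x x' -> wsum_eq y y' -> v (join x y) = v (join x' y').
Proof. intros Ex Ey; rewrite !v_join, Ex; apply wsum_ext; intros a; apply Ey. Qed.

Lemma wsum_coef_delta f a c k L : NoDup L -> In a L ->
  wsum f (map (fun g => (if Req_EM_T a g then (c + k g)%Z else k g, g)) L) =
  IZR c * f a + wsum f (map (fun g => (k g, g)) L).
Proof.
  induction L as [|b L IH]; intros HL Ha; [destruct Ha|].
  inversion HL as [|? ? HbL HL']; subst; simpl.
  destruct (Req_EM_T a b) as [<-|Hab].
  - rewrite (map_ext_in _ (fun g => (k g, g)) L); [rewrite plus_IZR; ring|].
    intros g Hg; destruct (Req_EM_T a g) as [<-|]; [contradiction|reflexivity].
  - destruct Ha as [<-|Ha]; [congruence|]; rewrite IH by assumption; ring.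
Qed.

Lemma wsum_coef f x L : NoDup L -> incl (map snd x) L ->
  wsum f x = wsum f (map (fun g => (coef x g, g)) L).
Proof.
  intros HL; induction x as [|[c a] x IH]; intros Hinc.
  - clear HL Hinc; induction L as [|g L IH]; [reflexivity|].
    simpl in *; rewrite <- IH; ring.
  - simpl; rewrite IH by (intros g Hg; apply Hinc; now right).
    symmetry; apply (wsum_coef_delta f a c (coef x) L HL (Hinc a (or_introl eq_refl))).
Qed.

Lemma wsum_filter_coef_nonzero f k L :
  wsum f (map (fun g => (k g, g)) (filter (fun g => negb (k g =? 0)%Z) L)) =
  wsum f (map (fun g => (k g, g)) L).
Proof.
  induction L as [|g L IH]; simpl; [reflexivity|].
  destruct (Z.eqb_spec (k g) 0) as [E|E]; simpl; rewrite IH; [rewrite E; ring|reflexivity].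
Qed.

(* A list representing an element of A^+ may still contain cancelling negative
   terms; [normal_form] merges equal exponents and drops zero coefficients. *)
Definition normal_form (x : A) : A :=
  map (fun g => (coef x g, g))
    (filter (fun g => negb (coef x g =? 0)%Z) (nodup Req_EM_T (map snd x))).

Lemma wsum_normal_form x : wsum_eq x (normal_form x).
Proof.
  intros f; unfold normal_form; rewrite wsum_filter_coef_nonzero.
  apply wsum_coef; [apply NoDup_nodup | intros g; apply nodup_In].
Qed.

Lemma pos_list_normal_form x : Apos x -> pos_list (normal_form x).
Proof.
  intros Hx p Hp; unfold normal_form in Hp.
  apply in_map_iff in Hp as [g [<- Hg]]; apply filter_In in Hg as [_ Hg]; simpl.
  apply Bool.negb_true_iff, Z.eqb_neq in Hg.
  destruct (Hx g) as [Hneg Hnn]; split; [lia|].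
  destruct (Rlt_dec g 0) as [Hlt|]; [now apply Hneg in Hlt | lra].
Qed.

Theorem proposition5p1 (sigma tau : A) (hs : Apos sigma) (ht : Apos tau) :
  v (join sigma tau) <=
  IZR (d tau) * v sigma + IZR (d sigma) * v tau - Rmin (v sigma) (v tau).
Proof.
  pose proof (wsum_normal_form sigma) as Es.
  pose proof (wsum_normal_form tau) as Et.
  rewrite (v_join_wsum_eq Es Et), (v_wsum_eq Es), (v_wsum_eq Et),
    (d_wsum_eq Es), (d_wsum_eq Et).
  now apply v_join_le_pos; apply pos_list_normal_form.
Qed.
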